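(* Consider an ideal gas of $N$ identical particles with single-particle energy eigenvalues $\varepsilon_1,\varepsilon_2,\ldots$ and canonical partition function $Z(\beta,N)=\sum_E\omega(E,N)e^{-\beta E}$. Suppose that $$Z(\beta,N)=m_{(\lambda)^q}\big(e^{-\beta\varepsilon_1},e^{-\beta\varepsilon_2},\ldots\big)+\sum_{I:\ \lambda_{I,1}\le q} M^I\, m_{(\lambda)_I}\big(e^{-\beta\varepsilon_1},e^{-\beta\varepsilon_2},\ldots\big),$$ where $(\lambda)^q$ is an integer partition of $N$ with largest part $\lambda_1=q$, the sum runs over partitions $(\lambda)_I=(\lambda_{I,1},\lambda_{I,2},\ldots)$ of $N$ with largest part $\lambda_{I,1}\le q$, and each $M^I$ is a nonnegative integer. Then the maximum occupation number of the system is $q$.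
   Context: $\omega(E,N)$ denotes the number of microstates with $N$ particles and total energy $E$. The monomial symmetric function of a partition $(\lambda)=(\lambda_1,\ldots,\lambda_l)$ is $m_{(\lambda)}(x_1,x_2,\ldots)=\sum x_{i_1}^{\lambda_1}x_{i_2}^{\lambda_2}\cdots x_{i_l}^{\lambda_l}$, summed over all distinct monomials of this form with distinct indices $i_1,\ldots,i_l$. With $x_i=e^{-\beta\varepsilon_i}$, a term $m_{(\lambda)}$ counts microstates in which $\lambda_1$ particles occupy one single-particle state, $\lambda_2$ particles occupy another, and so on. The maximum occupation number is the largest number of particles that can occupy a single single-particle quantum state in some microstate counted by $\omega(E,N)$. *)

From mathcomp Require Import all_boot.
From mathcomp Require Import finmap.
Set Implicit Arguments. Unset Strict Implicit. Unset Printing Implicit Defensive.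
Local Open Scope fset_scope.

(* Single-particle quantum states are indexed by nat (eps_0, eps_1, ...).
   An occupation configuration (= exponent vector of a monomial
   x_0^{n_0} x_1^{n_1} ... with x_i = e^{-beta eps_i}) is a finitely
   supported function nat -> nat. *)
Definition mono := {fsfun nat -> nat with 0%N}.

Definition num_particles (n : mono) : nat := \sum_(i <- finsupp n) n i.

Definition shape (n : mono) : seq nat := [seq n i | i <- finsupp n].

Definition is_partition (N : nat) (l : seq nat) : bool :=
  [&& sorted geq l, all (fun x => 0 < x) l & sumn l == N].

Definition largest_part (l : seq nat) : nat := head 0 l.

(* Formal power series in the variables x_0, x_1, ... with nat coefficients,
   given by their coefficient function on monomials. *)
Definition fps := mono -> nat.

(* monomial symmetric function m_(lambda): the sum of all distinct monomials
   x_{i1}^{l1} x_{i2}^{l2} ... with distinct indices; its coefficient at the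
   monomial x^n is 1 iff the nonzero exponents of n are, as a multiset, the
   parts of lambda, and 0 otherwise. *)
Definition msym (l : seq nat) : fps := fun n => nat_of_bool (perm_eq (shape n) l).

(* A system of N identical particles is described by g : mono -> nat,
   g n = number of microstates with occupation configuration n.
   Its canonical partition function, as a (formal) series in the
   x_i = e^{-beta eps_i}, is  Z = sum_microstates prod_i x_i^{n_i}
   = sum_n g n x^n; i.e. its coefficient function is g. *)
Definition Zpart (g : mono -> nat) : fps := fun n => g n.

Definition max_occupation (g : mono -> nat) (q : nat) : Prop :=
  (exists n i, 0 < g n /\ n i = q) /\ (forall n i, 0 < g n -> n i <= q).

From Pilot Require Import Defs.
From mathcomp Require Import all_boot.
From mathcomp Require Import finmap.
Set Implicit Arguments. Unset Strict Implicit. Unset Printing Implicit Defensive.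

(* The coefficient of a monomial x^n in Z is positive only if the occupation
   numbers of n are, up to order, the parts of (λ)^q or of some (λ)_I, and
   all of these parts are at most q.  Conversely the monomial
   x_0^{λ_1} x_1^{λ_2} ... of m_{(λ)^q} has coefficient at least 1 and
   puts q particles into the state 0. *)

Lemma sorted_geq_le_head (s : seq nat) x : sorted geq s -> x \in s -> x <= head 0 s.
Proof.
case: s => // a s /= sorted_as; rewrite inE => /orP [/eqP -> // | x_s].
have geq_trans : transitive geq by move=> y z w /= zy wz; apply: leq_trans wz zy.
exact: (allP (order_path_min geq_trans sorted_as)).
Qed.

Lemma partition_le_largest_part N l x :
  is_partition N l -> x \in l -> x <= largest_part l.
Proof. by case/and3P => sorted_l _ _; apply: sorted_geq_le_head. Qed.

Lemma msym_gt0 l n : (0 < msym l n) = perm_eq (Defs.shape n) l.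
Proof. by rewrite /msym; case: perm_eq. Qed.

Lemma mem_shape (n : mono) i : 0 < n i -> n i \in Defs.shape n.
Proof. by move=> n_i_gt0; apply: map_f; rewrite mem_finsupp -lt0n. Qed.

Lemma occupation_le_msym N l n i :
  is_partition N l -> 0 < msym l n -> n i <= largest_part l.
Proof.
move=> part_l; rewrite msym_gt0 => shape_l.
case: (posnP (n i)) => [-> // | n_i_gt0].
by apply: partition_le_largest_part part_l _; rewrite -(perm_mem shape_l) mem_shape.
Qed.

Definition mono_of_seq (s : seq nat) : mono :=
  [fsfun i in [fset i | i in iota 0 (size s)]%fset => nth 0 s i | 0].

Lemma mono_of_seqE s i : mono_of_seq s i = nth 0 s i.
Proof.
rewrite fsfun_fun !inE /= mem_iota add0n.
by case: ltnP => // s_le_i; rewrite nth_default.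
Qed.

Lemma shape_mono_of_seq s :
  all (fun x => 0 < x) s -> perm_eq (Defs.shape (mono_of_seq s)) s.
Proof.
move=> /allP s_gt0; rewrite /Defs.shape; set n := mono_of_seq s.
have -> : s = map n (iota 0 (size s)).
  by rewrite -{1}(mkseq_nth 0 s); apply: eq_map => i; rewrite mono_of_seqE.
apply: perm_map; apply: uniq_perm; [exact: fset_uniq | exact: iota_uniq |].
move=> i; rewrite mem_finsupp mono_of_seqE mem_iota add0n.
case: ltnP => i_s; last by rewrite nth_default.
by rewrite -lt0n; apply/s_gt0/mem_nth.
Qed.

Theorem theorem2 (N q : nat) (lq : seq nat) (Is : seq (seq nat))
    (M : seq nat -> nat) (g : mono -> nat) :
  (forall n, 0 < g n -> num_particles n = N) ->
  is_partition N lq -> largest_part lq = q ->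
  uniq Is ->
  (forall l, (l \in Is) = is_partition N l && (largest_part l <= q)) ->
  (forall n, Zpart g n = msym lq n + \sum_(l <- Is) M l * msym l n) ->
  max_occupation g q.
Proof.
move=> _ part_lq <- _ Is_parts Z_expansion.
split.
  have lq_gt0 : all (fun x => 0 < x) lq by case/and3P: part_lq.
  exists (mono_of_seq lq), 0; split; last by rewrite mono_of_seqE; case: (lq).
  have : 0 < msym lq (mono_of_seq lq) by rewrite msym_gt0 shape_mono_of_seq.
  by rewrite -[g _]/(Zpart g _) Z_expansion => /leq_trans; apply; rewrite leq_addr.
move=> n i; rewrite -[g n]/(Zpart g n) Z_expansion addn_gt0.
case/orP => [/(occupation_le_msym i part_lq) // | ].
rewrite lt0n sum_nat_seq_neq0 => /hasP [l l_Is /=].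
rewrite -lt0n muln_gt0 => /andP [_ msym_l_gt0].
move: l_Is; rewrite Is_parts => /andP [part_l l_le_lq].
exact: leq_trans (occupation_le_msym i part_l msym_l_gt0) l_le_lq.
Qed.
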